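(* Let $T$ be a triangle of type $(120^\circ,30^\circ,30^\circ)$. Then $h(n,T)\le\frac{4}{81}n^3$ for every positive integer $n$.
   Context: A triangle is of type $(\alpha,\beta,\gamma)$ if $\alpha\ge\beta\ge\gamma$ are its interior angles in degrees. For a triangle $T$ with side lengths $a,b,c$ and $\varepsilon>0$, with $\varepsilon'=\varepsilon\min\{a,b,c\}$, a triangle $A'B'C'$ is $\varepsilon$-congruent to $T$ if there are $A,B,C\in\mathbb{R}^2$ with $ABC$ congruent to $T$ and $A',B',C'$ within distance $\varepsilon'$ of $A,B,C$ respectively. $h(n,T,\varepsilon)$ is the maximum over $n$-point sets $P\subseteq\mathbb{R}^2$ of the number of 3-subsets of $P$ forming triangles $\varepsilon$-congruent to $T$, and $h(n,T)=\min_{\varepsilon>0}h(n,T,\varepsilon)$. *)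

From Stdlib Require Import Reals List ClassicalEpsilon.
From Coquelicot Require Import Coquelicot.
Open Scope R_scope.

Definition pt : Type := (R * R)%type.
Definition dist (p q : pt) : R :=
  sqrt ((fst p - fst q) ^ 2 + (snd p - snd q) ^ 2).

(* A triangle T is given by its side lengths (a, b, c); a genuine
   (non-degenerate) triangle satisfies the strict triangle inequalities. *)
Definition is_triangle (a b c : R) : Prop :=
  0 < a /\ 0 < b /\ 0 < c /\ a < b + c /\ b < c + a /\ c < a + b.

(* Interior angle (in degrees) opposite the side of length x, the other two
   sides having lengths y and z (law of cosines). *)
Definition angle_deg (x y z : R) : R :=
  acos ((y ^ 2 + z ^ 2 - x ^ 2) / (2 * y * z)) * 180 / PI.

Definition of_type (a b c al be ga : R) : Prop :=
  al >= be /\ be >= ga /\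
  (let A := angle_deg a b c in let B := angle_deg b c a in
   let C := angle_deg c a b in
   (A = al /\ B = be /\ C = ga) \/ (A = al /\ B = ga /\ C = be) \/
   (A = be /\ B = al /\ C = ga) \/ (A = be /\ B = ga /\ C = al) \/
   (A = ga /\ B = al /\ C = be) \/ (A = ga /\ B = be /\ C = al)).

Definition congruent_to (A B C : pt) (a b c : R) : Prop :=
  dist B C = a /\ dist C A = b /\ dist A B = c.

Definition eps_congruent (a b c eps : R) (A' B' C' : pt) : Prop :=
  exists A B C : pt, congruent_to A B C a b c /\
    let eps' := eps * Rmin a (Rmin b c) in
    dist A' A <= eps' /\ dist B' B <= eps' /\ dist C' C <= eps'.

Definition forms_eps_congruent (a b c eps : R) (p q r : pt) : Prop :=
  eps_congruent a b c eps p q r \/ eps_congruent a b c eps p r q \/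
  eps_congruent a b c eps q p r \/ eps_congruent a b c eps q r p \/
  eps_congruent a b c eps r p q \/ eps_congruent a b c eps r q p.

Definition ind (Q : Prop) : nat :=
  if excluded_middle_informative Q then 1%nat else 0%nat.

(* For an n-point set P = {P 0, ..., P (n-1)} (P injective on [0,n)),
   the number of 3-subsets {P i, P j, P k} (i < j < k < n) forming
   triangles eps-congruent to T. *)
Definition count_eps (n : nat) (P : nat -> pt) (a b c eps : R) : nat :=
  list_sum (map (fun k =>
    list_sum (map (fun j =>
      list_sum (map (fun i =>
        ind (forms_eps_congruent a b c eps (P i) (P j) (P k)))
      (seq 0 j)))
    (seq 0 k)))
  (seq 0 n)).

Definition n_point_set (n : nat) (P : nat -> pt) : Prop :=
  forall i j : nat, (i < n)%nat -> (j < n)%nat -> P i = P j -> i = j.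

(* h(n, T, eps): maximum over n-point sets of the count (as a supremum;
   the set of values is finite and nonempty, so the sup is attained). *)
Definition h_eps (n : nat) (a b c eps : R) : Rbar :=
  Lub_Rbar (fun x => exists P : nat -> pt,
    n_point_set n P /\ x = INR (count_eps n P a b c eps)).

(* h(n, T) = min over eps > 0 of h(n, T, eps) (as an infimum; the values
   are natural numbers, so the infimum is attained, i.e. is the min). *)
Definition h (n : nat) (a b c : R) : Rbar :=
  Glb_Rbar (fun x => exists eps : R, 0 < eps /\ Finite x = h_eps n a b c eps).

(* The sides of T are s, s and sqrt 3 s.  For eps = 10^-5, the triples of a point set that
   are eps-congruent to T form a 3-uniform hypergraph whose edges have squared side lengths
   within 10^-4 s^2 of s^2, s^2, 3 s^2.  The Gram matrix of planar points (taken relative to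
   one of them) has rank at most 2; checking the integer Gram matrices of all short/long
   patterns shows that this hypergraph contains no K_4^(3) and no five vertices that are
   pairwise covered by edges.  In such a hypergraph, moving the weight of one of two vertices
   not covered by a common edge onto the other does not decrease the Lagrangian, so the
   Lagrangian is attained on at most four vertices, where it is at most that of K_4^(3) minus
   an edge, 4/81 (for total weight 1).  The uniform weighting gives at most 4/81 n^3 edges. *)

From Pilot Require Import Defs.
From Stdlib Require Import Reals Lra Psatz List ZArith.
From Stdlib Require Import Classical ClassicalEpsilon Permutation Wellfounded Rgeom.
From Coquelicot Require Import Rcomplements Rbar Lub.
Import ListNotations.
Open Scope R_scope.

Lemma is_triangle_rotate a b c : is_triangle a b c -> is_triangle b c a.
Proof. unfold is_triangle; lra. Qed.

Lemma cosine_ratio_bounds x y z : is_triangle x y z ->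
  -1 <= (y ^ 2 + z ^ 2 - x ^ 2) / (2 * y * z) <= 1.
Proof.
  intros (hx & hy & hz & h1 & h2 & h3).
  set (t := (y ^ 2 + z ^ 2 - x ^ 2) / (2 * y * z)).
  assert (hyz : 0 < 2 * y * z) by nra.
  assert (ht : t * (2 * y * z) = y ^ 2 + z ^ 2 - x ^ 2) by (unfold t; field; lra).
  split; nra.
Qed.

Lemma law_of_cosines_deg x y z theta : is_triangle x y z -> angle_deg x y z = theta ->
  y ^ 2 + z ^ 2 - x ^ 2 = 2 * y * z * cos (theta * PI / 180).
Proof.
  intros ht hangle. pose proof PI_RGT_0.
  assert (hy : y <> 0) by (destruct ht as (_ & hy & _); lra).
  assert (hz : z <> 0) by (destruct ht as (_ & _ & hz & _); lra).
  unfold angle_deg in hangle.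
  assert (hacos : acos ((y ^ 2 + z ^ 2 - x ^ 2) / (2 * y * z)) = theta * PI / 180).
  { rewrite <- hangle. field. lra. }
  rewrite <- hacos, cos_acos by exact (cosine_ratio_bounds x y z ht).
  field. auto.
Qed.

Lemma sqrt3_sq : sqrt 3 ^ 2 = 3.
Proof. simpl. rewrite Rmult_1_r. apply sqrt_sqrt. lra. Qed.

Lemma sqrt3_bounds : 1.732 < sqrt 3 < 1.7321.
Proof. pose proof sqrt3_sq. pose proof (sqrt_pos 3). nra. Qed.

Lemma cos_120_deg : cos (120 * PI / 180) = - (1 / 2).
Proof.
  replace (120 * PI / 180) with (PI - PI / 3) by field.
  rewrite Rtrigo_facts.cos_pi_minus, cos_PI3. reflexivity.
Qed.

Lemma cos_30_deg : cos (30 * PI / 180) = sqrt 3 / 2.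
Proof. replace (30 * PI / 180) with (PI / 6) by field. apply cos_PI6. Qed.

Lemma sides_of_angles_120_30_30 x y z : is_triangle x y z ->
  angle_deg x y z = 120 -> angle_deg y z x = 30 -> angle_deg z x y = 30 ->
  y = z /\ x = sqrt 3 * y.
Proof.
  intros ht hx hy hz.
  pose proof (is_triangle_rotate _ _ _ ht) as ht'.
  pose proof (is_triangle_rotate _ _ _ ht') as ht''.
  pose proof (law_of_cosines_deg _ _ _ _ ht hx) as ex.
  pose proof (law_of_cosines_deg _ _ _ _ ht' hy) as ey.
  pose proof (law_of_cosines_deg _ _ _ _ ht'' hz) as ez.
  rewrite cos_120_deg in ex. rewrite cos_30_deg in ey, ez.
  destruct ht as (px & py & pz & _). pose proof sqrt3_sq. pose proof sqrt3_bounds.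
  assert (hsum : 2 * x = sqrt 3 * (y + z)).
  { assert (2 * x * x = sqrt 3 * (y + z) * x) by nra. nra. }
  assert (hyz : (z - y) * (2 * (z + y) - sqrt 3 * x) = 0) by nra.
  assert (y = z).
  { destruct (Rmult_integral _ _ hyz) as [h|h]; [lra|]. nra. }
  subst z. split; [reflexivity|nra].
Qed.

Definition side (long : bool) (s : R) : R := if long then sqrt 3 * s else s.

Lemma sides_of_type_120_30_30 a b c : is_triangle a b c -> of_type a b c 120 30 30 ->
  exists s la lb lc, 0 < s /\ (Nat.b2n la + Nat.b2n lb + Nat.b2n lc = 1)%nat /\
    a = side la s /\ b = side lb s /\ c = side lc s.
Proof.
  intros ht (_ & _ & hangles). cbv zeta in hangles.
  pose proof (is_triangle_rotate _ _ _ ht) as ht'.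
  pose proof (is_triangle_rotate _ _ _ ht') as ht''.
  pose proof ht as (ha & hb & hc & _).
  assert (hcases :
    (angle_deg a b c = 120 /\ angle_deg b c a = 30 /\ angle_deg c a b = 30) \/
    (angle_deg b c a = 120 /\ angle_deg c a b = 30 /\ angle_deg a b c = 30) \/
    (angle_deg c a b = 120 /\ angle_deg a b c = 30 /\ angle_deg b c a = 30)) by tauto.
  destruct hcases as [(A & B & C) | [(B & C & A) | (C & A & B)]].
  - destruct (sides_of_angles_120_30_30 _ _ _ ht A B C) as [-> ->].
    exists c, true, false, false. auto.
  - destruct (sides_of_angles_120_30_30 _ _ _ ht' B C A) as [-> ->].
    exists a, false, true, false. auto.
  - destruct (sides_of_angles_120_30_30 _ _ _ ht'' C A B) as [-> ->].
    exists b, false, false, true. auto.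
Qed.

Definition sqdist (p q : pt) : R := (fst p - fst q) ^ 2 + (snd p - snd q) ^ 2.

Lemma sqdist_nonneg p q : 0 <= sqdist p q.
Proof. unfold sqdist. apply Rplus_le_le_0_compat; apply pow2_ge_0. Qed.

Lemma sqdist_sym p q : sqdist p q = sqdist q p.
Proof. unfold sqdist. ring. Qed.

Lemma sqdist_diag p : sqdist p p = 0.
Proof. unfold sqdist. ring. Qed.

Lemma dist_sq p q : Defs.dist p q ^ 2 = sqdist p q.
Proof. apply pow2_sqrt, sqdist_nonneg. Qed.

Lemma dist_sym p q : Defs.dist p q = Defs.dist q p.
Proof. unfold Defs.dist. f_equal. ring. Qed.

Lemma dist_triangle p q r : Defs.dist p r <= Defs.dist p q + Defs.dist q r.
Proof.
  assert (e : forall u v, Defs.dist u v = dist_euc (fst u) (snd u) (fst v) (snd v))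
    by (intros; unfold Defs.dist, dist_euc, Rsqr; f_equal; ring).
  rewrite !e. apply triangle.
Qed.

Lemma dist_perturb A' B' A B e : Defs.dist A' A <= e -> Defs.dist B' B <= e ->
  Rabs (Defs.dist A' B' - Defs.dist A B) <= 2 * e.
Proof.
  intros hA hB. apply Rabs_le_between.
  pose proof (dist_triangle A' A B'). pose proof (dist_triangle A B B').
  pose proof (dist_triangle A A' B). pose proof (dist_triangle A' B' B).
  rewrite (dist_sym A A') in *. rewrite (dist_sym B B') in *. lra.
Qed.

Lemma sqdist_close p q L d : 0 <= L -> Rabs (Defs.dist p q - L) <= d ->
  Rabs (sqdist p q - L ^ 2) <= d * (2 * L + d).
Proof.
  intros hL hd. rewrite <- dist_sq.
  pose proof (Rabs_pos (Defs.dist p q - L)). pose proof (sqrt_pos (sqdist p q)).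
  apply Rabs_le_between' in hd. apply Rabs_le_between. fold (Defs.dist p q) in *. nra.
Qed.

(* [eps0] is the [eps] at which [h n T eps] is bounded, [eta] the resulting relative
   tolerance on squared side lengths. *)
Definition eps0 : R := 1 / 100000.
Definition eta : R := 1 / 10000.

Definition nominal_sq (long : bool) : Z := if long then 3%Z else 1%Z.

Definition long (s : R) (p q : pt) : bool :=
  if Rlt_dec (2 * s ^ 2) (sqdist p q) then true else false.

Definition near_side (s : R) (p q : pt) : Prop :=
  Rabs (sqdist p q - IZR (nominal_sq (long s p q)) * s ^ 2) <= eta * s ^ 2.

Definition near_tri (s : R) (p q r : pt) : Prop :=
  near_side s p q /\ near_side s q r /\ near_side s p r /\
  (Nat.b2n (long s p q) + Nat.b2n (long s q r) + Nat.b2n (long s p r) = 1)%nat.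

Lemma long_sym s p q : long s p q = long s q p.
Proof. unfold long. rewrite sqdist_sym. reflexivity. Qed.

Lemma near_side_sym s p q : near_side s p q -> near_side s q p.
Proof. unfold near_side. rewrite sqdist_sym, long_sym. auto. Qed.

Lemma near_side_irrefl s p : 0 < s -> ~ near_side s p p.
Proof.
  intros hs hnear. unfold near_side in hnear. rewrite sqdist_diag in hnear.
  apply Rabs_le_between in hnear. pose proof (pow_lt s 2 hs).
  unfold eta in hnear. destruct (long s p p); simpl in hnear; lra.
Qed.

Lemma near_tri_swap12 s p q r : near_tri s p q r -> near_tri s q p r.
Proof.
  intros (hpq & hqr & hpr & hlong). repeat split; auto using near_side_sym.
  rewrite (long_sym s q p). lia.
Qed.

Lemma near_tri_swap23 s p q r : near_tri s p q r -> near_tri s p r q.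
Proof.
  intros (hpq & hqr & hpr & hlong). repeat split; auto using near_side_sym.
  rewrite (long_sym s r q). lia.
Qed.

Lemma long_of_near s p q l : 0 < s ->
  Rabs (sqdist p q - IZR (nominal_sq l) * s ^ 2) <= eta * s ^ 2 -> long s p q = l.
Proof.
  intros hs hnear. apply Rabs_le_between' in hnear. pose proof (pow_lt s 2 hs).
  unfold long, eta in *. destruct Rlt_dec, l; simpl in hnear; auto; lra.
Qed.

Lemma side_sq l s : side l s ^ 2 = IZR (nominal_sq l) * s ^ 2.
Proof.
  destruct l; unfold side; simpl nominal_sq; [|ring].
  rewrite Rpow_mult_distr, sqrt3_sq. reflexivity.
Qed.

(* Works because [2 eps0 (2 sqrt 3 + 2 eps0) < eta]. *)
Lemma near_side_of_dist s p q l : 0 < s ->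
  Rabs (Defs.dist p q - side l s) <= 2 * (eps0 * s) -> near_side s p q /\ long s p q = l.
Proof.
  intros hs hd.
  assert (hside : 0 <= side l s <= sqrt 3 * s)
    by (pose proof sqrt3_bounds; destruct l; simpl; nra).
  assert (hnear : Rabs (sqdist p q - IZR (nominal_sq l) * s ^ 2) <= eta * s ^ 2).
  { rewrite <- side_sq. eapply Rle_trans; [apply sqdist_close; [lra|exact hd]|].
    pose proof sqrt3_bounds. unfold eps0, eta. nra. }
  assert (hl := long_of_near s p q l hs hnear).
  split; [unfold near_side; rewrite hl|]; assumption.
Qed.

Lemma min_side s la lb lc : 0 < s -> (Nat.b2n la + Nat.b2n lb + Nat.b2n lc = 1)%nat ->
  Rmin (side la s) (Rmin (side lb s) (side lc s)) = s.
Proof.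
  intros hs hsum. pose proof sqrt3_bounds.
  destruct la, lb, lc; simpl in hsum; try lia; unfold side, Rmin; repeat destruct Rle_dec; nra.
Qed.

Lemma eps_congruent_near_tri s la lb lc A' B' C' : 0 < s ->
  (Nat.b2n la + Nat.b2n lb + Nat.b2n lc = 1)%nat ->
  eps_congruent (side la s) (side lb s) (side lc s) eps0 A' B' C' -> near_tri s A' B' C'.
Proof.
  intros hs hsum (A & B & C & (hBC & hCA & hAB) & hA & hB & hC).
  cbv zeta in hA, hB, hC. rewrite min_side in hA, hB, hC by assumption.
  rewrite dist_sym in hCA.
  destruct (near_side_of_dist s A' B' lc hs) as [nAB lAB].
  { rewrite <- hAB. apply dist_perturb; assumption. }
  destruct (near_side_of_dist s B' C' la hs) as [nBC lBC].
  { rewrite <- hBC. apply dist_perturb; assumption. }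
  destruct (near_side_of_dist s A' C' lb hs) as [nAC lAC].
  { rewrite <- hCA. apply dist_perturb; assumption. }
  repeat split; auto. rewrite lAB, lBC, lAC. lia.
Qed.

Lemma forms_eps_congruent_near_tri s la lb lc p q r : 0 < s ->
  (Nat.b2n la + Nat.b2n lb + Nat.b2n lc = 1)%nat ->
  forms_eps_congruent (side la s) (side lb s) (side lc s) eps0 p q r -> near_tri s p q r.
Proof.
  intros hs hsum hforms.
  pose proof (fun x y z => eps_congruent_near_tri s la lb lc x y z hs hsum) as hnear.
  destruct hforms as [h|[h|[h|[h|[h|h]]]]]; apply hnear in h;
    auto using near_tri_swap12, near_tri_swap23.
Qed.

Inductive idx3 : Set := i0 | i1 | i2.

Definition det3 (m : idx3 -> idx3 -> R) : R :=
  m i0 i0 * m i1 i1 * m i2 i2 - m i0 i0 * m i1 i2 * m i2 i1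
  - m i0 i1 * m i1 i0 * m i2 i2 + m i0 i1 * m i1 i2 * m i2 i0
  + m i0 i2 * m i1 i0 * m i2 i1 - m i0 i2 * m i1 i1 * m i2 i0.

Definition det3Z (m : idx3 -> idx3 -> Z) : Z :=
  (m i0 i0 * m i1 i1 * m i2 i2 - m i0 i0 * m i1 i2 * m i2 i1
  - m i0 i1 * m i1 i0 * m i2 i2 + m i0 i1 * m i1 i2 * m i2 i0
  + m i0 i2 * m i1 i0 * m i2 i1 - m i0 i2 * m i1 i1 * m i2 i0)%Z.

Lemma det3Z_IZR m : IZR (det3Z m) = det3 (fun k l => IZR (m k l)).
Proof. unfold det3Z, det3. repeat rewrite ?minus_IZR, ?plus_IZR, ?mult_IZR. reflexivity. Qed.

Lemma det3_div m t : t <> 0 -> det3 (fun k l => m k l / t) = det3 m / t ^ 3.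
Proof. intros ht. unfold det3. field. exact ht. Qed.

Lemma Rabs_mul3_le a b c A B C : Rabs a <= A -> Rabs b <= B -> Rabs c <= C ->
  Rabs (a * b * c) <= A * B * C.
Proof.
  intros ha hb hc. rewrite !Rabs_mult.
  pose proof (Rabs_pos a). pose proof (Rabs_pos b). pose proof (Rabs_pos c).
  apply Rmult_le_compat; [nra|lra|apply Rmult_le_compat; lra|lra].
Qed.

Lemma mul3_perturb x y z x' y' z' h : Rabs x <= 3 -> Rabs y <= 3 -> Rabs z <= 3 ->
  Rabs (x' - x) <= h -> Rabs (y' - y) <= h -> Rabs (z' - z) <= h -> h <= 1 ->
  Rabs (x' * y' * z' - x * y * z) <= 37 * h.
Proof.
  intros hx hy hz dx dy dz hh.
  assert (hy' : Rabs y' <= 4).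
  { replace y' with (y + (y' - y)) by ring. eapply Rle_trans; [apply Rabs_triang|lra]. }
  assert (hz' : Rabs z' <= 4).
  { replace z' with (z + (z' - z)) by ring. eapply Rle_trans; [apply Rabs_triang|lra]. }
  replace (x' * y' * z' - x * y * z)
    with ((x' - x) * y' * z' + x * (y' - y) * z' + x * y * (z' - z)) by ring.
  pose proof (Rabs_mul3_le _ _ _ _ _ _ dx hy' hz').
  pose proof (Rabs_mul3_le _ _ _ _ _ _ hx dy hz').
  pose proof (Rabs_mul3_le _ _ _ _ _ _ hx hy dz).
  pose proof (Rabs_triang ((x' - x) * y' * z' + x * (y' - y) * z') (x * y * (z' - z))).
  pose proof (Rabs_triang ((x' - x) * y' * z') (x * (y' - y) * z')).
  lra.
Qed.

Lemma det3_perturb m m' h : (forall k l, Rabs (m k l) <= 3) ->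
  (forall k l, Rabs (m' k l - m k l) <= h) -> h <= 1 ->
  Rabs (det3 m' - det3 m) <= 222 * h.
Proof.
  intros hm hd hh.
  assert (hterm : forall a b c d e f,
    -(37 * h) <= m' a b * m' c d * m' e f - m a b * m c d * m e f <= 37 * h).
  { intros. apply Rabs_le_between, mul3_perturb; auto. }
  apply Rabs_le_between. unfold det3.
  pose proof (hterm i0 i0 i1 i1 i2 i2). pose proof (hterm i0 i0 i1 i2 i2 i1).
  pose proof (hterm i0 i1 i1 i0 i2 i2). pose proof (hterm i0 i1 i1 i2 i2 i0).
  pose proof (hterm i0 i2 i1 i0 i2 i1). pose proof (hterm i0 i2 i1 i1 i2 i0).
  lra.
Qed.

Definition pt_gram (o a b : pt) : R :=
  (fst a - fst o) * (fst b - fst o) + (snd a - snd o) * (snd b - snd o).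

Lemma pt_gram_sqdist o a b : pt_gram o a b = (sqdist o a + sqdist o b - sqdist a b) / 2.
Proof. unfold pt_gram, sqdist. field. Qed.

Lemma planar_gram_det3 o (u v : idx3 -> pt) : det3 (fun k l => pt_gram o (u k) (v l)) = 0.
Proof. unfold det3, pt_gram. ring. Qed.

Definition gramZ (c : nat -> nat -> Z) (i j : nat) : Z := (c 0%nat i + c 0%nat j - c i j)%Z.

Definition minorZ (c : nat -> nat -> Z) (I J : idx3 -> nat) : Z :=
  det3Z (fun k l => gramZ c (I k) (J l)).

Section GramRigidity.

Variables (s : R) (q : nat -> pt) (c : nat -> nat -> Z) (N : nat).
Hypothesis s_pos : 0 < s.
Hypothesis c_approx : forall i j, (i <= N)%nat -> (j <= N)%nat ->
  (0 <= c i j <= 3)%Z /\ Rabs (sqdist (q i) (q j) - IZR (c i j) * s ^ 2) <= eta * s ^ 2.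

Lemma gram_entry_approx i j : (i <= N)%nat -> (j <= N)%nat ->
  Rabs (IZR (gramZ c i j) / 2) <= 3 /\
  Rabs (pt_gram (q 0%nat) (q i) (q j) / s ^ 2 - IZR (gramZ c i j) / 2) <= 3 / 2 * eta.
Proof.
  intros hi hj.
  destruct (c_approx 0 i ltac:(lia) hi) as [[c0i c0i'] h0i].
  destruct (c_approx 0 j ltac:(lia) hj) as [[c0j c0j'] h0j].
  destruct (c_approx i j hi hj) as [[cij cij'] hij].
  apply IZR_le in c0i, c0i', c0j, c0j', cij, cij'.
  pose proof (pow_lt s 2 s_pos).
  unfold gramZ. rewrite minus_IZR, plus_IZR, pt_gram_sqdist. split.
  - apply Rabs_le_between. lra.
  - apply Rabs_le_between' in h0i, h0j, hij.
    apply Rabs_le_between'. split; [apply Rle_div_r|apply Rle_div_l]; lra.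
Qed.

(* The Gram matrix of the vectors [q i - q 0] has rank at most 2, and divided by [s^2] its
   entries are within [3/2 eta] of the half-integers [gramZ c i j / 2]; so a 3x3 minor of
   [gramZ c] is an integer of absolute value < 1. *)
Lemma gram_minor_rigid I J : (forall k, (I k <= N)%nat /\ (J k <= N)%nat) ->
  minorZ c I J = 0%Z.
Proof.
  intros hIJ.
  set (m := fun k l => pt_gram (q 0%nat) (q (I k)) (q (J l)) / s ^ 2).
  set (n := fun k l => IZR (gramZ c (I k) (J l)) / 2).
  assert (hs2 : s ^ 2 <> 0) by (apply pow_nonzero; lra).
  assert (hm : det3 m = 0).
  { unfold m. rewrite det3_div by exact hs2. rewrite planar_gram_det3. lra. }
  assert (hn : det3 n = IZR (minorZ c I J) / 8).
  { unfold n, minorZ. rewrite det3_div, <- det3Z_IZR by lra. field. }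
  assert (hclose := det3_perturb n m (3 / 2 * eta)).
  rewrite hm, hn in hclose.
  assert (hsmall : Rabs (0 - IZR (minorZ c I J) / 8) <= 222 * (3 / 2 * eta)).
  { apply hclose; [| |unfold eta; lra]; intros k l;
      destruct (hIJ k), (hIJ l); apply gram_entry_approx; tauto. }
  apply Rabs_le_between in hsmall. unfold eta in hsmall.
  assert (IZR (minorZ c I J) < 1) as hlt by lra. assert (-1 < IZR (minorZ c I J)) as hgt by lra.
  apply lt_IZR in hlt. apply lt_IZR in hgt. lia.
Qed.

End GramRigidity.

Definition class_matrix (pat : nat -> nat -> bool) (i j : nat) : Z :=
  if Nat.eqb i j then 0%Z else nominal_sq (pat i j).

Lemma near_sides_minor_zero s q pat N I J : 0 < s ->
  (forall i j, pat i j = pat j i) ->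
  (forall i j, (i < j <= N)%nat -> near_side s (q i) (q j) /\ pat i j = long s (q i) (q j)) ->
  (forall k, (I k <= N)%nat /\ (J k <= N)%nat) ->
  minorZ (class_matrix pat) I J = 0%Z.
Proof.
  intros hs hsym hnear hIJ. apply (gram_minor_rigid s q _ N); auto.
  intros i j hi hj. unfold class_matrix.
  destruct (Nat.eqb_spec i j) as [<-|hij].
  - rewrite sqdist_diag, Rmult_0_l, Rminus_0_r, Rabs_R0.
    split; [lia|]. pose proof (pow2_ge_0 s). unfold eta. lra.
  - assert (hpair : near_side s (q i) (q j) /\ pat i j = long s (q i) (q j)).
    { assert (i < j \/ j < i)%nat as [hlt|hgt] by lia; [apply hnear; lia|].
      destruct (hnear j i ltac:(lia)) as [hn hp].
      rewrite hsym, hp, long_sym. auto using near_side_sym. }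
    destruct hpair as [hn ->]. split; [destruct long; simpl; lia|exact hn].
Qed.

Definition pattern5 (b01 b02 b03 b04 b12 b13 b14 b23 b24 b34 : bool) (i j : nat) : bool :=
  match i, j with
  | 0, 1 | 1, 0 => b01 | 0, 2 | 2, 0 => b02 | 0, 3 | 3, 0 => b03 | 0, 4 | 4, 0 => b04
  | 1, 2 | 2, 1 => b12 | 1, 3 | 3, 1 => b13 | 1, 4 | 4, 1 => b14
  | 2, 3 | 3, 2 => b23 | 2, 4 | 4, 2 => b24 | 3, 4 | 4, 3 => b34
  | _, _ => false
  end%nat.

Lemma pattern5_sym b01 b02 b03 b04 b12 b13 b14 b23 b24 b34 i j :
  pattern5 b01 b02 b03 b04 b12 b13 b14 b23 b24 b34 i j =
  pattern5 b01 b02 b03 b04 b12 b13 b14 b23 b24 b34 j i.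
Proof. destruct i as [|[|[|[|[|i]]]]]; destruct j as [|[|[|[|[|j]]]]]; reflexivity. Qed.

Definition triple (a b c : nat) (k : idx3) : nat :=
  match k with i0 => a | i1 => b | i2 => c end.

Definition triples_1to4 : list (idx3 -> nat) :=
  [triple 1 2 3; triple 1 2 4; triple 1 3 4; triple 2 3 4]%nat.

Definition has_nonzero_minor (c : nat -> nat -> Z) : bool :=
  existsb (fun I => existsb (fun J => negb (minorZ c I J =? 0)%Z) triples_1to4) triples_1to4.

Lemma has_nonzero_minor_true c : has_nonzero_minor c = true ->
  exists I J, (forall k, (I k <= 4)%nat /\ (J k <= 4)%nat) /\ minorZ c I J <> 0%Z.
Proof.
  intros h. apply existsb_exists in h as (I & hI & h).
  apply existsb_exists in h as (J & hJ & h).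
  exists I, J. split; [|apply Bool.negb_true_iff, Z.eqb_neq in h; exact h].
  assert (hbound : forall T, In T triples_1to4 -> forall k, (T k <= 4)%nat)
    by (intros T hT k; repeat destruct hT as [<-|hT]; destruct k; simpl; lia || contradiction).
  intros k. split; auto.
Qed.

Lemma five_point_patterns b01 b02 b03 b04 b12 b13 b14 b23 b24 b34 :
  has_nonzero_minor (class_matrix (pattern5 b01 b02 b03 b04 b12 b13 b14 b23 b24 b34)) = true.
Proof. destruct b01, b02, b03, b04, b12, b13, b14, b23, b24, b34; vm_compute; reflexivity. Qed.

Lemma four_point_patterns b01 b02 b03 b12 b13 b23 :
  (Nat.b2n b01 + Nat.b2n b12 + Nat.b2n b02 = 1)%nat ->
  (Nat.b2n b01 + Nat.b2n b13 + Nat.b2n b03 = 1)%nat ->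
  (Nat.b2n b02 + Nat.b2n b23 + Nat.b2n b03 = 1)%nat ->
  (Nat.b2n b12 + Nat.b2n b23 + Nat.b2n b13 = 1)%nat ->
  minorZ (class_matrix (pattern5 b01 b02 b03 false b12 b13 false b23 false false))
    (triple 1 2 3) (triple 1 2 3) <> 0%Z.
Proof. destruct b01, b02, b03, b12, b13, b23; simpl; try lia; vm_compute; discriminate. Qed.

Lemma no_five_near_sides s (q : nat -> pt) : 0 < s ->
  ~ (forall i j, (i < j <= 4)%nat -> near_side s (q i) (q j)).
Proof.
  intros hs hnear.
  set (l := fun i j => long s (q i) (q j)).
  destruct (has_nonzero_minor_true _ (five_point_patterns (l 0 1) (l 0 2) (l 0 3) (l 0 4) (l 1 2)
    (l 1 3) (l 1 4) (l 2 3) (l 2 4) (l 3 4))%nat) as (I & J & hIJ & hminor).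
  apply hminor, (near_sides_minor_zero s q _ 4); auto using pattern5_sym.
  intros i j hij. split; [auto|].
  destruct i as [|[|[|[|[|i]]]]]; destruct j as [|[|[|[|[|j]]]]]; try lia; reflexivity.
Qed.

Lemma no_four_near_tri s p0 p1 p2 p3 : 0 < s ->
  near_tri s p0 p1 p2 -> near_tri s p0 p1 p3 -> near_tri s p0 p2 p3 -> near_tri s p1 p2 p3 ->
  False.
Proof.
  intros hs (n01 & n12 & n02 & h012) (_ & n13 & n03 & h013) (_ & n23 & _ & h023) (_ & _ & _ & h123).
  set (q := fun i => match i with 0 => p0 | 1 => p1 | 2 => p2 | _ => p3 end%nat).
  apply (four_point_patterns _ _ _ _ _ _ h012 h013 h023 h123),
    (near_sides_minor_zero s q _ 3); auto using pattern5_sym.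
  - intros i j hij.
    destruct i as [|[|[|[|i]]]]; destruct j as [|[|[|[|j]]]]; try lia; split; auto.
  - intros k. destruct k; simpl; lia.
Qed.

Fixpoint lsum {A : Type} (f : A -> R) (l : list A) : R :=
  match l with [] => 0 | x :: t => f x + lsum f t end.

Lemma lsum_app {A} (f : A -> R) l1 l2 : lsum f (l1 ++ l2) = lsum f l1 + lsum f l2.
Proof. induction l1; simpl; lra. Qed.

Lemma lsum_ext {A} (f g : A -> R) l : (forall x, In x l -> f x = g x) -> lsum f l = lsum g l.
Proof. induction l; simpl; intros H; auto. rewrite H, IHl; auto. Qed.

Lemma lsum_plus {A} (f g : A -> R) l : lsum (fun x => f x + g x) l = lsum f l + lsum g l.
Proof. induction l; simpl; lra. Qed.

Lemma lsum_scal {A} c (f : A -> R) l : lsum (fun x => c * f x) l = c * lsum f l.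
Proof. induction l; simpl; lra. Qed.

Lemma lsum_map {A B} (f : B -> R) (g : A -> B) l : lsum f (map g l) = lsum (fun x => f (g x)) l.
Proof. induction l; simpl; congruence. Qed.

Lemma lsum_perm {A} (f : A -> R) l l' : Permutation l l' -> lsum f l = lsum f l'.
Proof. induction 1; simpl; lra. Qed.

Lemma lsum_zero {A} (f : A -> R) l : (forall x, In x l -> f x = 0) -> lsum f l = 0.
Proof.
  induction l as [|x l IH]; simpl; intros H; [reflexivity|].
  rewrite H, IH; auto with datatypes. ring.
Qed.

Lemma ForallOrdPairs_map {A B} (R : B -> B -> Prop) (f : A -> B) l :
  ForallOrdPairs (fun x y => R (f x) (f y)) l -> ForallOrdPairs R (map f l).
Proof. induction 1; simpl; constructor; [apply Forall_map|]; auto. Qed.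

Lemma ForallOrdPairs_app_l {A} (R : A -> A -> Prop) l1 l2 :
  ForallOrdPairs R (l1 ++ l2) -> ForallOrdPairs R l1.
Proof.
  induction l1; simpl; intros H; [constructor|].
  inversion H as [|? ? hhead htail]; subst.
  constructor; auto. apply Forall_forall. intros x hx.
  rewrite Forall_forall in hhead. apply hhead, in_or_app. auto.
Qed.

Lemma not_ForallOrdPairs_split {A} (R : A -> A -> Prop) l : ~ ForallOrdPairs R l ->
  exists l1 x l2 y l3, l = l1 ++ x :: l2 ++ y :: l3 /\ ~ R x y.
Proof.
  induction l as [|a l IH]; intros hnot; [destruct hnot; constructor|].
  destruct (classic (Forall (R a) l)) as [hall|hall].
  - assert (htail : ~ ForallOrdPairs R l) by (intros h; apply hnot; constructor; auto).
    destruct (IH htail) as (l1 & x & l2 & y & l3 & -> & hxy).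
    exists (a :: l1), x, l2, y, l3. auto.
  - rewrite Forall_forall in hall. apply not_all_ex_not in hall as [y hy].
    apply imply_to_and in hy as [hin hay]. apply in_split in hin as (l2 & l3 & ->).
    exists [], a, l2, y, l3. auto.
Qed.

Lemma ForallOrdPairs_nth {A} (R : A -> A -> Prop) l d i j : ForallOrdPairs R l ->
  (i < j < length l)%nat -> R (nth i l d) (nth j l d).
Proof.
  intros H. revert i j. induction H as [|a l hhead htail IH]; simpl; intros i j hij; [lia|].
  destruct i, j; try lia.
  - rewrite Forall_forall in hhead. apply hhead, nth_In. lia.
  - apply IH. lia.
Qed.

Lemma mul_sum_pairs_le a b c d : 0 <= a -> 0 <= b -> 0 <= c -> 0 <= d ->
  a * (b * c + b * d + c * d) <= 4 / 81 * (a + b + c + d) ^ 3.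
Proof.
  intros ha hb hc hd. set (t := b + c + d).
  assert (hpairs : b * c + b * d + c * d <= t ^ 2 / 3)
    by (unfold t; pose proof (pow2_ge_0 (b - c)); pose proof (pow2_ge_0 (b - d));
        pose proof (pow2_ge_0 (c - d)); lra).
  (* AM-GM in the form [4 (a + t)^3 - 27 a t^2 = (t - 2 a)^2 (4 t + a)]. *)
  assert (hamgm : 27 * a * t ^ 2 <= 4 * (a + t) ^ 3).
  { assert (0 <= (t - 2 * a) ^ 2 * (4 * t + a))
      by (apply Rmult_le_pos; [apply pow2_ge_0|unfold t; lra]).
    nra. }
  replace (a + b + c + d) with (a + t) by (unfold t; ring). nra.
Qed.

Lemma K4_minus_lagrangian_le wa wb wc wd gabc gabd gacd gbcd :
  0 <= wa -> 0 <= wb -> 0 <= wc -> 0 <= wd ->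
  0 <= gabc <= 1 -> 0 <= gabd <= 1 -> 0 <= gacd <= 1 -> 0 <= gbcd <= 1 ->
  gabc = 0 \/ gabd = 0 \/ gacd = 0 \/ gbcd = 0 ->
  wa * wb * wc * gabc + wa * wb * wd * gabd + wa * wc * wd * gacd + wb * wc * wd * gbcd
    <= 4 / 81 * (wa + wb + wc + wd) ^ 3.
Proof.
  intros ha hb hc hd gabc' gabd' gacd' gbcd' hcases.
  assert (hterm : forall x y z g, 0 <= x -> 0 <= y -> 0 <= z -> 0 <= g <= 1 ->
    0 <= x * y * z * g <= x * y * z).
  { intros x y z g hx hy hz hg. assert (0 <= x * y * z) by (repeat apply Rmult_le_pos; auto). nra. }
  pose proof (hterm _ _ _ _ ha hb hc gabc'). pose proof (hterm _ _ _ _ ha hb hd gabd').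
  pose proof (hterm _ _ _ _ ha hc hd gacd'). pose proof (hterm _ _ _ _ hb hc hd gbcd').
  pose proof (mul_sum_pairs_le _ _ _ _ ha hb hc hd).
  pose proof (mul_sum_pairs_le _ _ _ _ hb ha hc hd).
  pose proof (mul_sum_pairs_le _ _ _ _ hc ha hb hd).
  pose proof (mul_sum_pairs_le _ _ _ _ hd ha hb hc).
  destruct hcases as [-> | [-> | [-> | ->]]]; lra.
Qed.

Lemma ind_iff (P Q : Prop) : (P <-> Q) -> Defs.ind P = Defs.ind Q.
Proof.
  intros H. unfold Defs.ind.
  destruct (excluded_middle_informative P), (excluded_middle_informative Q); tauto.
Qed.

Section Lagrangian.

Context {V : Type}.
Variable E : V -> V -> V -> Prop.
Hypothesis E_swap12 : forall p q r, E p q r -> E q p r.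
Hypothesis E_swap23 : forall p q r, E p q r -> E p r q.
Hypothesis E_irrefl : forall p q, ~ E p p q.

Definition edge_ind (p q r : V) : R := INR (Defs.ind (E p q r)).

Lemma edge_ind_swap12 p q r : edge_ind p q r = edge_ind q p r.
Proof. unfold edge_ind. f_equal. apply ind_iff. split; auto. Qed.

Lemma edge_ind_swap23 p q r : edge_ind p q r = edge_ind p r q.
Proof. unfold edge_ind. f_equal. apply ind_iff. split; auto. Qed.

Lemma edge_ind_diag p q : edge_ind p p q = 0.
Proof.
  unfold edge_ind, Defs.ind.
  destruct excluded_middle_informative as [h|]; [now apply E_irrefl in h|auto].
Qed.

Lemma edge_ind_diag23 p q : edge_ind p q q = 0.
Proof. rewrite edge_ind_swap12, edge_ind_swap23. apply edge_ind_diag. Qed.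

Lemma edge_ind_cases p q r :
  (edge_ind p q r = 0 /\ ~ E p q r) \/ (edge_ind p q r = 1 /\ E p q r).
Proof. unfold edge_ind, Defs.ind. destruct excluded_middle_informative; simpl; auto. Qed.

Lemma edge_ind_bounds p q r : 0 <= edge_ind p q r <= 1.
Proof. destruct (edge_ind_cases p q r) as [[-> _]|[-> _]]; lra. Qed.

(* A weighting is a list of weighted vertices; [lagrangian L] sums over ORDERED triples,
   so it is 6 times the usual hypergraph Lagrangian. *)
Definition pair_link (L : list (V * R)) (p q : V) : R :=
  lsum (fun z => edge_ind p q (fst z) * snd z) L.
Definition link (L : list (V * R)) (p : V) : R :=
  lsum (fun y => snd y * pair_link L p (fst y)) L.
Definition lagrangian (L : list (V * R)) : R :=
  lsum (fun x => snd x * link L (fst x)) L.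
Definition total_weight (L : list (V * R)) : R := lsum snd L.

Lemma link_perm L L' p : Permutation L L' -> link L p = link L' p.
Proof.
  intros hp. unfold link. rewrite (lsum_perm _ _ _ hp).
  apply lsum_ext. intros y _. unfold pair_link. rewrite (lsum_perm _ _ _ hp). reflexivity.
Qed.

Lemma lagrangian_perm L L' : Permutation L L' -> lagrangian L = lagrangian L'.
Proof.
  intros hp. unfold lagrangian. rewrite (lsum_perm _ _ _ hp).
  apply lsum_ext. intros x _. rewrite (link_perm _ _ _ hp). reflexivity.
Qed.

Lemma pair_link_cons a L p q :
  pair_link (a :: L) p q = edge_ind p q (fst a) * snd a + pair_link L p q.
Proof. reflexivity. Qed.

Lemma link_cons a L p : link (a :: L) p = link L p + 2 * snd a * pair_link L p (fst a).
Proof.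
  unfold link at 1. cbn [lsum]. rewrite pair_link_cons, edge_ind_diag23.
  rewrite (lsum_ext _ (fun y => snd a * (edge_ind p (fst a) (fst y) * snd y) +
                                snd y * pair_link L p (fst y))), lsum_plus, lsum_scal.
  - fold (link L p). fold (pair_link L p (fst a)). ring.
  - intros y _. rewrite pair_link_cons, (edge_ind_swap23 p (fst y)). ring.
Qed.

Lemma pair_link_diag L p : pair_link L p p = 0.
Proof. apply lsum_zero. intros. rewrite edge_ind_diag. ring. Qed.

Lemma lagrangian_cons a L : lagrangian (a :: L) = lagrangian L + 3 * snd a * link L (fst a).
Proof.
  unfold lagrangian at 1. simpl. rewrite link_cons, pair_link_diag.
  rewrite (lsum_ext _ (fun x => snd x * link L (fst x) +
                                2 * snd a * (snd x * pair_link L (fst x) (fst a)))),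
    lsum_plus, lsum_scal.
  - fold (lagrangian L).
    replace (lsum (fun x => snd x * pair_link L (fst x) (fst a)) L) with (link L (fst a)); [ring|].
    apply lsum_ext. intros x _. f_equal. apply lsum_ext. intros z _.
    rewrite edge_ind_swap12. reflexivity.
  - intros x _. rewrite link_cons. ring.
Qed.

(* No edge contains both [x] and [y], so the Lagrangian is affine in the weight moved
   between them. *)
Lemma lagrangian_merge x y L : (forall z, edge_ind (fst x) (fst y) z = 0) ->
  0 <= snd x -> 0 <= snd y ->
  lagrangian (x :: y :: L) <= lagrangian ((fst x, snd x + snd y) :: L) \/
  lagrangian (x :: y :: L) <= lagrangian ((fst y, snd x + snd y) :: L).
Proof.
  intros hxy hx hy.
  assert (hpair : pair_link L (fst x) (fst y) = 0)
    by (apply lsum_zero; intros; rewrite hxy; ring).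
  rewrite !lagrangian_cons, link_cons, hpair. simpl.
  destruct (Rle_lt_dec (link L (fst y)) (link L (fst x))); [left|right]; nra.
Qed.

Definition uniform_weighting (P : nat -> V) (n : nat) : list (V * R) :=
  map (fun i => (P i, 1)) (seq 0 n).

Lemma uniform_weighting_S_perm P n :
  Permutation (uniform_weighting P (S n)) ((P n, 1) :: uniform_weighting P n).
Proof.
  unfold uniform_weighting. rewrite seq_S, map_app. simpl.
  apply Permutation_sym, Permutation_cons_append.
Qed.

Lemma total_weight_uniform P n : total_weight (uniform_weighting P n) = INR n.
Proof.
  induction n; [reflexivity|].
  unfold total_weight in *.
  rewrite (lsum_perm _ _ _ (uniform_weighting_S_perm P n)), S_INR. simpl. lra.
Qed.

Lemma pair_link_uniform P n p q :
  pair_link (uniform_weighting P n) p q = lsum (fun i => edge_ind p q (P i)) (seq 0 n).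
Proof.
  unfold pair_link, uniform_weighting. rewrite lsum_map. apply lsum_ext. intros. simpl. ring.
Qed.

Lemma link_uniform P n p : link (uniform_weighting P n) p =
  2 * lsum (fun j => lsum (fun i => edge_ind p (P i) (P j)) (seq 0 j)) (seq 0 n).
Proof.
  induction n; [unfold link; simpl; ring|].
  rewrite (link_perm _ _ _ (uniform_weighting_S_perm P n)), link_cons, IHn, pair_link_uniform,
    seq_S, lsum_app.
  simpl. rewrite (lsum_ext (fun i => edge_ind p (P n) (P i)) (fun i => edge_ind p (P i) (P n)))
    by (intros; apply edge_ind_swap23).
  ring.
Qed.

Lemma lagrangian_uniform P n : lagrangian (uniform_weighting P n) =
  6 * lsum (fun k => lsum (fun j => lsum (fun i => edge_ind (P i) (P j) (P k))
                                         (seq 0 j)) (seq 0 k)) (seq 0 n).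
Proof.
  induction n; [unfold lagrangian; simpl; ring|].
  rewrite (lagrangian_perm _ _ (uniform_weighting_S_perm P n)), lagrangian_cons, IHn, link_uniform,
    seq_S, lsum_app.
  simpl. rewrite (lsum_ext (fun j => lsum (fun i => edge_ind (P n) (P i) (P j)) (seq 0 j))
                           (fun j => lsum (fun i => edge_ind (P i) (P j) (P n)) (seq 0 j))).
  - ring.
  - intros j _. apply lsum_ext. intros i _.
    rewrite edge_ind_swap12, edge_ind_swap23. reflexivity.
Qed.

Hypothesis no_K4 : forall a b c d, ~ (E a b c /\ E a b d /\ E a c d /\ E b c d).
Hypothesis no_five_covered :
  forall l, length l = 5%nat -> ~ ForallOrdPairs (fun p q => exists r, E p q r) l.

Lemma lagrangian_four a b c d : lagrangian [a; b; c; d] =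
  6 * (snd a * snd b * snd c * edge_ind (fst a) (fst b) (fst c)
     + snd a * snd b * snd d * edge_ind (fst a) (fst b) (fst d)
     + snd a * snd c * snd d * edge_ind (fst a) (fst c) (fst d)
     + snd b * snd c * snd d * edge_ind (fst b) (fst c) (fst d)).
Proof. rewrite !lagrangian_cons, !link_cons. unfold lagrangian, link, pair_link. simpl. ring. Qed.

Lemma lagrangian_four_le a b c d : Forall (fun x => 0 <= snd x) [a; b; c; d] ->
  lagrangian [a; b; c; d] <= 8 / 27 * total_weight [a; b; c; d] ^ 3.
Proof.
  intros hw. rewrite Forall_forall in hw.
  assert (hmissing :
    edge_ind (fst a) (fst b) (fst c) = 0 \/ edge_ind (fst a) (fst b) (fst d) = 0 \/
    edge_ind (fst a) (fst c) (fst d) = 0 \/ edge_ind (fst b) (fst c) (fst d) = 0).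
  { destruct (edge_ind_cases (fst a) (fst b) (fst c)) as [[h _]|[_ h1]]; [tauto|].
    destruct (edge_ind_cases (fst a) (fst b) (fst d)) as [[h _]|[_ h2]]; [tauto|].
    destruct (edge_ind_cases (fst a) (fst c) (fst d)) as [[h _]|[_ h3]]; [tauto|].
    destruct (edge_ind_cases (fst b) (fst c) (fst d)) as [[h _]|[_ h4]]; [tauto|].
    exfalso. exact (no_K4 _ _ _ _ (conj h1 (conj h2 (conj h3 h4)))). }
  rewrite lagrangian_four. unfold total_weight. simpl.
  pose proof (K4_minus_lagrangian_le (snd a) (snd b) (snd c) (snd d) _ _ _ _
    (hw a ltac:(simpl; auto)) (hw b ltac:(simpl; auto)) (hw c ltac:(simpl; auto))
    (hw d ltac:(simpl; auto)) (edge_ind_bounds _ _ _) (edge_ind_bounds _ _ _)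
    (edge_ind_bounds _ _ _) (edge_ind_bounds _ _ _) hmissing).
  replace (snd a + (snd b + (snd c + (snd d + 0)))) with (snd a + snd b + snd c + snd d) by ring.
  lra.
Qed.

Lemma lagrangian_pad v k L : lagrangian (repeat (v, 0) k ++ L) = lagrangian L.
Proof. induction k; simpl; [|rewrite lagrangian_cons, IHk]; simpl; ring. Qed.

Lemma total_weight_pad v k L : total_weight (repeat (v, 0) k ++ L) = total_weight L.
Proof. induction k; simpl; [|unfold total_weight in *; simpl; rewrite IHk]; ring. Qed.

(* Zero-weight copies of a vertex reduce weightings with at most four vertices to four. *)
Lemma lagrangian_short_le L : (length L <= 4)%nat -> Forall (fun x => 0 <= snd x) L ->
  lagrangian L <= 8 / 27 * total_weight L ^ 3.
Proof.
  destruct L as [|a L]; intros hlen hw; [unfold lagrangian, total_weight; simpl; lra|].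
  set (k := (4 - length (a :: L))%nat).
  rewrite <- (lagrangian_pad (fst a) k), <- (total_weight_pad (fst a) k).
  assert (hw' : Forall (fun x => 0 <= snd x) (repeat (fst a, 0) k ++ a :: L)).
  { apply Forall_app. split; [|exact hw]. apply Forall_forall. intros x hx.
    apply repeat_spec in hx. subst x. simpl. lra. }
  assert (hlen' : length (repeat (fst a, 0) k ++ a :: L) = 4%nat)
    by (rewrite length_app, repeat_length; unfold k; simpl length in *; lia).
  revert hw' hlen'. generalize (repeat (fst a, 0) k ++ a :: L).
  intros l hw' hlen'. destruct l as [|w [|x [|y [|z [|]]]]]; simpl in hlen'; try lia.
  apply lagrangian_four_le, hw'.
Qed.

Lemma covered_length_le L :
  ForallOrdPairs (fun x y : V * R => exists r, E (fst x) (fst y) r) L -> (length L <= 4)%nat.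
Proof.
  intros hcov. apply Nat.nlt_ge. intros h5.
  apply (no_five_covered (firstn 5 (map fst L))).
  - rewrite length_firstn, length_map. lia.
  - apply ForallOrdPairs_app_l with (skipn 5 (map fst L)).
    rewrite firstn_skipn. apply ForallOrdPairs_map, hcov.
Qed.

Theorem lagrangian_le L :
  Forall (fun x => 0 <= snd x) L -> lagrangian L <= 8 / 27 * total_weight L ^ 3.
Proof.
  induction L as [L IH] using (well_founded_induction (wf_inverse_image _ _ lt (@length _) lt_wf)).
  intros hw.
  destruct (classic (ForallOrdPairs (fun x y => exists r, E (fst x) (fst y) r) L)) as [hcov|hcov].
  - apply lagrangian_short_le, hw. apply covered_length_le, hcov.
  - destruct (not_ForallOrdPairs_split _ _ hcov) as (l1 & x & l2 & y & l3 & hL & hxy).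
    pose proof (Permutation_middle2 l1 l2 l3 x y) as hperm. rewrite <- hL in hperm.
    set (R' := l1 ++ l2 ++ l3) in hperm.
    rewrite <- (lagrangian_perm _ _ hperm). unfold total_weight.
    rewrite <- (lsum_perm _ _ _ hperm).
    assert (hw' : Forall (fun x => 0 <= snd x) (x :: y :: R'))
      by (eapply Permutation_Forall; [apply Permutation_sym, hperm|exact hw]).
    inversion hw' as [|? ? hx hw'']; inversion hw'' as [|? ? hy hR]; subst.
    assert (hzero : forall z, edge_ind (fst x) (fst y) z = 0).
    { intros z. destruct (edge_ind_cases (fst x) (fst y) z) as [[h _]|[_ h]]; [exact h|].
      exfalso. apply hxy. exists z. exact h. }
    assert (hmerged : forall v,
      lagrangian ((v, snd x + snd y) :: R') <= 8 / 27 * lsum snd (x :: y :: R') ^ 3).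
    { intros v.
      replace (lsum snd (x :: y :: R')) with (total_weight ((v, snd x + snd y) :: R'))
        by (unfold total_weight; simpl; ring).
      apply IH; [|constructor; simpl; [lra|exact hR]].
      rewrite <- (Permutation_length hperm). simpl. lia. }
    destruct (lagrangian_merge x y R' hzero hx hy) as [hm|hm]; eapply Rle_trans; eauto.
Qed.

End Lagrangian.

Lemma INR_list_sum_map {A} (f : A -> nat) l :
  INR (list_sum (map f l)) = lsum (fun x => INR (f x)) l.
Proof. induction l; simpl; [reflexivity|]. rewrite plus_INR, IHl. reflexivity. Qed.

Section TriangleHypergraph.

Variables (s : R) (la lb lc : bool).
Hypothesis s_pos : 0 < s.
Hypothesis one_long : (Nat.b2n la + Nat.b2n lb + Nat.b2n lc = 1)%nat.

Let cong_edge := forms_eps_congruent (side la s) (side lb s) (side lc s) eps0.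

Lemma cong_edge_near_tri p q r : cong_edge p q r -> near_tri s p q r.
Proof. apply forms_eps_congruent_near_tri; assumption. Qed.

Lemma cong_edge_swap12 p q r : cong_edge p q r -> cong_edge q p r.
Proof. unfold cong_edge, forms_eps_congruent. tauto. Qed.

Lemma cong_edge_swap23 p q r : cong_edge p q r -> cong_edge p r q.
Proof. unfold cong_edge, forms_eps_congruent. tauto. Qed.

Lemma cong_edge_irrefl p q : ~ cong_edge p p q.
Proof.
  intros h. destruct (cong_edge_near_tri _ _ _ h) as [h' _].
  exact (near_side_irrefl s p s_pos h').
Qed.

Lemma cong_edge_no_K4 p0 p1 p2 p3 :
  ~ (cong_edge p0 p1 p2 /\ cong_edge p0 p1 p3 /\ cong_edge p0 p2 p3 /\ cong_edge p1 p2 p3).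
Proof.
  intros (h1 & h2 & h3 & h4).
  exact (no_four_near_tri s _ _ _ _ s_pos (cong_edge_near_tri _ _ _ h1)
    (cong_edge_near_tri _ _ _ h2) (cong_edge_near_tri _ _ _ h3) (cong_edge_near_tri _ _ _ h4)).
Qed.

Lemma cong_edge_no_five_covered l :
  length l = 5%nat -> ~ ForallOrdPairs (fun p q => exists r, cong_edge p q r) l.
Proof.
  intros hlen hcov. apply (no_five_near_sides s (fun i => nth i l (0, 0)) s_pos).
  intros i j hij. destruct (ForallOrdPairs_nth _ l (0, 0) i j hcov ltac:(lia)) as [r hr].
  apply cong_edge_near_tri in hr as [hnear _]. exact hnear.
Qed.

Lemma count_eps_le n P :
  INR (count_eps n P (side la s) (side lb s) (side lc s) eps0) <= 4 / 81 * INR n ^ 3.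
Proof.
  assert (hcount : lagrangian cong_edge (uniform_weighting P n) =
                   6 * INR (count_eps n P (side la s) (side lb s) (side lc s) eps0)).
  { rewrite lagrangian_uniform by auto using cong_edge_swap12, cong_edge_swap23, cong_edge_irrefl.
    f_equal.
    unfold count_eps. rewrite INR_list_sum_map. apply lsum_ext. intros k _.
    rewrite INR_list_sum_map. apply lsum_ext. intros j _.
    rewrite INR_list_sum_map. reflexivity. }
  assert (hw : Forall (fun x => 0 <= snd x) (uniform_weighting P n)).
  { apply Forall_forall. intros x hx. apply in_map_iff in hx as (i & <- & _). simpl. lra. }
  pose proof (lagrangian_le cong_edge cong_edge_swap12 cong_edge_swap23 cong_edge_irrefl
    cong_edge_no_K4 cong_edge_no_five_covered (uniform_weighting P n) hw) as hle.
  rewrite hcount, total_weight_uniform in hle. lra.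
Qed.

End TriangleHypergraph.

Lemma Lub_Rbar_finite_le (F : R -> Prop) x0 B : F x0 -> (forall x, F x -> x <= B) ->
  exists r, Lub_Rbar F = Finite r /\ r <= B.
Proof.
  intros h0 hB. destruct (Lub_Rbar_correct F) as [hub hleast].
  specialize (hub x0 h0). specialize (hleast (Finite B) hB).
  destruct (Lub_Rbar F) as [r| |]; simpl in hub, hleast; try contradiction.
  exists r. auto.
Qed.

Theorem lemma3p5 : forall a b c : R,
  is_triangle a b c -> of_type a b c 120 30 30 ->
  forall n : nat, (0 < n)%nat ->
  Rbar_le (h n a b c) (Finite (4 / 81 * INR n ^ 3)).
Proof.
  intros a b c htri htype n _.
  destruct (sides_of_type_120_30_30 a b c htri htype)
    as (s & la & lb & lc & hs & hone & -> & -> & ->).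
  set (counts := fun x => exists P, n_point_set n P /\
    x = INR (count_eps n P (side la s) (side lb s) (side lc s) eps0)).
  assert (hline : n_point_set n (fun i => (INR i, 0))).
  { intros i j _ _ e. injection e as e. apply INR_eq, e. }
  destruct (Lub_Rbar_finite_le counts _ (4 / 81 * INR n ^ 3) (ex_intro _ _ (conj hline eq_refl)))
    as (r & hr & hrB).
  { intros x (P & _ & ->). apply count_eps_le; assumption. }
  apply Rbar_le_trans with (Finite r); [|exact hrB].
  apply (proj1 (Glb_Rbar_correct _)). exists eps0. split; [unfold eps0; lra|].
  symmetry. exact hr.
Qed.
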